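(* Let $G$ be a group with a finite generating set $S$ such that the word length $l=|\cdot|_S:G\to\mathbb{Z}$ is a $\delta$-hyperbolic length function for some $\delta\in\mathbb{Z}$, $\delta\geqslant0$. Let $H=G\times G$ and define $l_H:H\to\mathbb{Z}^2$ by $l_H(f,g)=(l(f),l(g))$, where $\mathbb{Z}^2$ carries the right lexicographic order. Then for every integer $\delta_1>\delta$, $l_H$ is a $\delta_H$-hyperbolic length function on $H$, where $\delta_H=(\delta_1,\delta_1)$.
   Context: The right lexicographic order on $\mathbb{Z}^2$: $(a,b)\leqslant(c,d)$ iff $b<d$, or $b=d$ and $a\leqslant c$. For an ordered abelian group $\Lambda$ (with ordered divisible hull $\Lambda_{\mathbb{Q}}\supseteq\Lambda$), a length function on a group $K$ is $l:K\to\Lambda$ with $l(k)\geqslant0$, $l(1)=0$, $l(k)=l(k^{-1})$, $l(kk')\leqslant l(k)+l(k')$. With $c(g,h)=\tfrac12(l(g)+l(h)-l(g^{-1}h))\in\Lambda_{\mathbb{Q}}$, $l$ is $\delta$-hyperbolic ($\delta\in\Lambda$) if $c(f,g)\geqslant\min\{c(f,h),c(g,h)\}-\delta$ for all $f,g,h\in K$. The word length $|g|_S$ is the minimal length of a word in $S^{\pm1}$ representing $g$. *)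

From HB Require Import structures.
From mathcomp Require Import all_boot all_order all_algebra.
From Stdlib Require Import List.
Set Implicit Arguments. Unset Strict Implicit. Unset Printing Implicit Defensive.
Import Order.TTheory GRing.Theory Num.Theory.
Local Open Scope ring_scope.

Definition is_group (G : Type) (mul : G -> G -> G) (one : G) (inv : G -> G) : Prop :=
  [/\ (forall x y z, mul x (mul y z) = mul (mul x y) z),
      (forall x, mul one x = x), (forall x, mul x one = x),
      (forall x, mul (inv x) x = one) & (forall x, mul x (inv x) = one)].

(* A word in S^{+-1}: a list of letters (s, b), meaning s if b = false and s^-1 if b = true. *)
Definition word_ok (G : Type) (S : list G) (w : list (G * bool)) : Prop :=
  List.Forall (fun x => List.In x.1 S) w.

Definition word_eval (G : Type) (mul : G -> G -> G) (one : G) (inv : G -> G)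
  (w : list (G * bool)) : G :=
  foldr (fun x acc => mul (if x.2 then inv x.1 else x.1) acc) one w.

Definition generates (G : Type) (mul : G -> G -> G) (one : G) (inv : G -> G)
  (S : list G) : Prop :=
  forall g, exists w, word_ok S w /\ word_eval mul one inv w = g.

Definition is_word_length (G : Type) (mul : G -> G -> G) (one : G) (inv : G -> G)
  (S : list G) (g : G) (n : nat) : Prop :=
  (exists w, [/\ word_ok S w, size w = n & word_eval mul one inv w = g]) /\
  (forall w, word_ok S w -> word_eval mul one inv w = g -> (n <= size w)%N).

Definition is_length_fun_Z (G : Type) (mul : G -> G -> G) (one : G) (inv : G -> G)
  (l : G -> int) : Prop :=
  [/\ (forall k, 0 <= l k), l one = 0, (forall k, l k = l (inv k)) &
      (forall k k', l (mul k k') <= l k + l k')].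

Definition cZ (G : Type) (mul : G -> G -> G) (inv : G -> G) (l : G -> int) (g h : G) : rat :=
  (l g + l h - l (mul (inv g) h))%:~R / 2%:R.

Definition hyperbolic_Z (G : Type) (mul : G -> G -> G) (inv : G -> G)
  (l : G -> int) (delta : int) : Prop :=
  forall f g h, Order.min (cZ mul inv l f h) (cZ mul inv l g h) - delta%:~R
                <= cZ mul inv l f g.

Definition rlex_le (R : numDomainType) (x y : R * R) : bool :=
  (x.2 < y.2) || ((x.2 == y.2) && (x.1 <= y.1)).

Definition rlex_min (R : numDomainType) (x y : R * R) : R * R :=
  if rlex_le x y then x else y.

Definition pair_add (R : numDomainType) (x y : R * R) : R * R := (x.1 + y.1, x.2 + y.2).
Definition pair_sub (R : numDomainType) (x y : R * R) : R * R := (x.1 - y.1, x.2 - y.2).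

Definition is_length_fun_Z2 (K : Type) (mul : K -> K -> K) (one : K) (inv : K -> K)
  (l : K -> int * int) : Prop :=
  [/\ (forall k, rlex_le (0, 0) (l k)), l one = (0, 0), (forall k, l k = l (inv k)) &
      (forall k k', rlex_le (l (mul k k')) (pair_add (l k) (l k')))].

Definition toQ2 (x : int * int) : rat * rat := (x.1%:~R, x.2%:~R).

Definition cZ2 (K : Type) (mul : K -> K -> K) (inv : K -> K) (l : K -> int * int)
  (g h : K) : rat * rat :=
  let s := toQ2 (pair_sub (pair_add (l g) (l h)) (l (mul (inv g) h))) in
  (s.1 / 2%:R, s.2 / 2%:R).

Definition hyperbolic_Z2 (K : Type) (mul : K -> K -> K) (inv : K -> K)
  (l : K -> int * int) (delta : int * int) : Prop :=
  forall f g h, rlex_le (pair_sub (rlex_min (cZ2 mul inv l f h) (cZ2 mul inv l g h)) (toQ2 delta))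
                        (cZ2 mul inv l f g).

Definition prod_mul (G : Type) (mul : G -> G -> G) (x y : G * G) : G * G :=
  (mul x.1 y.1, mul x.2 y.2).
Definition prod_inv (G : Type) (inv : G -> G) (x : G * G) : G * G := (inv x.1, inv x.2).

From HB Require Import structures.
From mathcomp Require Import all_boot all_order all_algebra.
Import Order.TTheory GRing.Theory Num.Theory.
Set Implicit Arguments. Unset Strict Implicit. Unset Printing Implicit Defensive.
Local Open Scope ring_scope.

(* The right lexicographic order on pairs is decided by the second
   coordinate first, so two facts about it carry the whole argument:
   componentwise inequality implies lexicographic inequality, and a strict
   inequality in the second coordinate alone already suffices.
   - Length-function axioms for l_H = (l1, l2) on G x G hold componentwise,
     hence lexicographically.
   - The Gromov product of l_H has as second coordinate the Gromov product
     of l2 on the second factors, and the lexicographic minimum has the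
     ordinary minimum as its second coordinate.  Hyperbolicity of l2 with
     constant delta therefore gives, in the second coordinate, a STRICT
     inequality once delta is replaced by any delta2 > delta; the first
     coordinate of the constant is then irrelevant.
   The theorem is the special case l1 = l2 = |.|_S, delta_H = (delta1, delta1). *)

Section RightLex.
Variable R : numDomainType.
Implicit Types x y : R * R.

Lemma rlex_le_componentwise x y : x.1 <= y.1 -> x.2 <= y.2 -> rlex_le x y.
Proof.
move=> le1; rewrite le_eqVlt => /orP[/eqP eq2 | lt2]; rewrite /rlex_le.
  by rewrite eq2 eqxx le1 orbT.
by rewrite lt2.
Qed.

Lemma rlex_le_snd_lt x y : x.2 < y.2 -> rlex_le x y.
Proof. by rewrite /rlex_le => ->. Qed.

End RightLex.

Lemma rlex_min_snd (R : realDomainType) (x y : R * R) :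
  (rlex_min x y).2 = Order.min x.2 y.2.
Proof.
rewrite /rlex_min /rlex_le; case: ltgtP => //= eq2.
by case: ifP.
Qed.

Section ProductLength.
Variables (G : Type) (mul : G -> G -> G) (one : G) (inv : G -> G).
Variables l1 l2 : G -> int.

Definition pair_length (x : G * G) : int * int := (l1 x.1, l2 x.2).

Lemma pair_length_is_length_fun :
  is_length_fun_Z mul one inv l1 -> is_length_fun_Z mul one inv l2 ->
  is_length_fun_Z2 (prod_mul mul) (one, one) (prod_inv inv) pair_length.
Proof.
case=> ge0_1 one_1 inv_1 tri_1 [ge0_2 one_2 inv_2 tri_2]; split.
- by move=> k; apply: rlex_le_componentwise; [exact: ge0_1 | exact: ge0_2].
- by rewrite /pair_length /= one_1 one_2.
- by move=> k; rewrite /pair_length /= -inv_1 -inv_2.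
- by move=> k k'; apply: rlex_le_componentwise; [apply: tri_1 | apply: tri_2].
Qed.

Lemma cZ2_pair_length_snd (g h : G * G) :
  (cZ2 (prod_mul mul) (prod_inv inv) pair_length g h).2 = cZ mul inv l2 g.2 h.2.
Proof. by []. Qed.

(* If l2 is delta-hyperbolic then pair_length is (d1, d2)-hyperbolic for
   every d1 and every d2 > delta: the second coordinate alone decides. *)
Lemma pair_length_hyperbolic (delta d1 d2 : int) :
  hyperbolic_Z mul inv l2 delta -> delta < d2 ->
  hyperbolic_Z2 (prod_mul mul) (prod_inv inv) pair_length (d1, d2).
Proof.
move=> hyp2 lt_delta f g h; apply: rlex_le_snd_lt.
rewrite /pair_sub /= rlex_min_snd !cZ2_pair_length_snd.
apply: lt_le_trans (hyp2 f.2 g.2 h.2).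
by rewrite ltrD2l ltrN2 ltr_int.
Qed.

End ProductLength.

Theorem mainTheorem12 (G : Type) (mul : G -> G -> G) (one : G) (inv : G -> G)
  (hG : is_group mul one inv) (S : list G) (hS : generates mul one inv S)
  (wl : G -> nat) (hwl : forall g, is_word_length mul one inv S g (wl g))
  (delta : int) (hdelta : 0 <= delta)
  (hlen : is_length_fun_Z mul one inv (fun g => (wl g)%:Z))
  (hhyp : hyperbolic_Z mul inv (fun g => (wl g)%:Z) delta)
  (delta1 : int) (hd1 : delta < delta1) :
  let lH := fun x : G * G => ((wl x.1)%:Z, (wl x.2)%:Z) in
  is_length_fun_Z2 (prod_mul mul) (one, one) (prod_inv inv) lH /\
  hyperbolic_Z2 (prod_mul mul) (prod_inv inv) lH (delta1, delta1).
Proof.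
move=> lH; split.
- exact: (pair_length_is_length_fun hlen hlen).
- exact: (pair_length_hyperbolic (fun g => (wl g)%:Z) delta1 hhyp hd1).
Qed.
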